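(* Let $G=(V,T,P,S)$ be a context-free grammar, let $W\subseteq V$, and let $F\subseteq W^*$ be a regular language. Then the language $L(G,F)$ of $G$ finalized by $F$ is context-free.
   Context: A context-free grammar $G=(V,T,P,S)$ has total alphabet $V$, terminal alphabet $T\subseteq V$, nonterminal alphabet $N=V-T$, finite rule set $P\subseteq N\times V^*$, start symbol $S\in N$; $\Rightarrow^*$ is its derivation relation and $\phi(G)=\{w\in V^*\mid S\Rightarrow^* w\}$ is its set of sentential forms. For $X\subseteq V$, $\pi_X$ denotes the homomorphism from $V^*$ to $X^*$ with $\pi_X(a)=a$ for $a\in X$ and $\pi_X(a)=\varepsilon$ for $a\in V-X$. For $W\subseteq V$ and $F\subseteq W^*$, set $\phi(G,F)=\{x\in\phi(G)\mid \pi_W(x)\in F\}$ and $L(G,F)=\{\pi_T(y)\mid y\in\phi(G,F),\ \pi_{N-W}(y)=\varepsilon\}$ (the language of $G$ finalized by $F$). *)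

From mathcomp Require Import all_boot.
Set Implicit Arguments. Unset Strict Implicit. Unset Printing Implicit Defensive.

(* A context-free grammar G = (V, T, P, S): the total alphabet V is a finType,
   the terminal alphabet is a set T of V, nonterminals N = V - T,
   the finite rule set P is a list of pairs (A, alpha), S is the start symbol. *)
Record cfg (V : finType) := CFG {
  cfg_term  : {set V};
  cfg_rules : seq (V * seq V);
  cfg_start : V }.

Definition cfg_wf (V : finType) (G : cfg V) : Prop :=
  (forall r, r \in cfg_rules G -> r.1 \notin cfg_term G) /\
  cfg_start G \notin cfg_term G.

Definition derive1 (V : finType) (G : cfg V) (x y : seq V) : Prop :=
  exists u v A alpha, (A, alpha) \in cfg_rules G /\
    x = u ++ A :: v /\ y = u ++ alpha ++ v.

Inductive derives (V : finType) (G : cfg V) : seq V -> seq V -> Prop :=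
  | derives_refl x : derives G x x
  | derives_step x y z : derive1 G x y -> derives G y z -> derives G x z.

Definition sentential (V : finType) (G : cfg V) (w : seq V) : Prop :=
  derives G [:: cfg_start G] w.

Definition proj (V : finType) (X : {set V}) (w : seq V) : seq V :=
  [seq a <- w | a \in X].

Definition cfg_lang (V : finType) (G : cfg V) (w : seq V) : Prop :=
  all (fun a => a \in cfg_term G) w /\ sentential G w.

Definition finalized_lang (V : finType) (G : cfg V) (W : {set V})
    (F : seq V -> Prop) (w : seq V) : Prop :=
  exists y, sentential G y /\ F (proj W y) /\
    proj (~: cfg_term G :\: W) y = [::] /\ w = proj (cfg_term G) y.

Definition regular_over (V : finType) (W : {set V}) (F : seq V -> Prop) : Prop :=
  exists (Q : finType) (q0 : Q) (delta : Q -> V -> Q) (acc : {set Q}),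
    forall w, F w <-> (all (fun a => a \in W) w /\ foldl delta q0 w \in acc).

(* L (a language over terminal alphabet T subset of V) is context-free:
   generated by some well-formed CFG whose terminal alphabet is (an injective
   copy of) T. *)
Definition context_free_over (V : finType) (T : {set V}) (L : seq V -> Prop) : Prop :=
  exists (V' : finType) (G' : cfg V') (iota : V -> V'),
    injective iota /\ cfg_wf G' /\ cfg_term G' = iota @: T /\
    (forall w, all (fun a => a \in T) w ->  (L w <-> cfg_lang G' (map iota w))) /\
    (forall w, L w -> all (fun a => a \in T) w).

From mathcomp Require Import all_boot.
Set Implicit Arguments. Unset Strict Implicit. Unset Printing Implicit Defensive.

(* The triple construction of Bar-Hillel, Perles and Shamir. A new symbol
   [p, X, q] derives what X derives, provided the automaton runs from p to q
   on the W-symbols of the result, and a fresh start symbol rewrites to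
   [q0, S, f] for accepting f. Terminals rewrite to themselves and symbols of
   W - T to the empty word, each taking its automaton step; symbols of N - W
   have no such rule, so the terminal words of the new grammar are exactly the
   terminal projections of the sentential forms y of G with no symbol in N - W
   and an accepted W-projection. *)

Lemma proj_cat (V : finType) (X : {set V}) u v :
  proj X (u ++ v) = proj X u ++ proj X v.
Proof. exact: filter_cat. Qed.

Section Yields.

Variables (V : finType) (G : cfg V).

(* [yields x y] is [x =>* y] given as a derivation forest: each symbol of x is
   kept or rewritten by a rule whose right-hand side yields a factor of y. *)
Inductive yields : seq V -> seq V -> Prop :=
  | yields_nil : yields [::] [::]
  | yields_keep X u w : yields u w -> yields (X :: u) (X :: w)
  | yields_rule A al u w1 w2 : (A, al) \in cfg_rules G ->
      yields al w1 -> yields u w2 -> yields (A :: u) (w1 ++ w2).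

Lemma yields_refl x : yields x x.
Proof. by elim: x => [|X x IH]; [exact: yields_nil | exact: yields_keep]. Qed.

Lemma yields_cat x1 y1 x2 y2 :
  yields x1 y1 -> yields x2 y2 -> yields (x1 ++ x2) (y1 ++ y2).
Proof.
elim=> [//|X u w _ IH|A al u w1 w2 r g1 _ _ IH] g2 /=; first exact/yields_keep/IH.
by rewrite -catA; apply: yields_rule r g1 _; apply: IH.
Qed.

Lemma yields_cat_inv x1 x2 y :
  yields (x1 ++ x2) y -> exists y1 y2, [/\ y = y1 ++ y2, yields x1 y1 & yields x2 y2].
Proof.
elim: x1 y => [|X x1 IH] y /= g; first by exists [::], y; split=> //; exact: yields_nil.
inversion g as [|? ? w g'|? al ? w1 w2 r gal g']; subst;
  have [y1 [y2 [-> g1 g2]]] := IH _ g'.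
- by exists (X :: y1), y2; split=> //; exact: yields_keep.
- by exists (w1 ++ y1), y2; rewrite catA; split=> //; exact: yields_rule r gal g1.
Qed.

Lemma yields_nil_inv y : yields [::] y -> y = [::].
Proof. by move=> g; inversion g. Qed.

Lemma yields1_inv X y :
  yields [:: X] y -> y = [:: X] \/ exists2 al, (X, al) \in cfg_rules G & yields al y.
Proof.
move=> g; inversion g as [|? ? w g0|? al ? w1 w2 r g1 g0]; subst.
- by left; rewrite (yields_nil_inv g0).
- by right; exists al; rewrite ?(yields_nil_inv g0) ?cats0.
Qed.

Lemma derives_trans x y z : derives G x y -> derives G y z -> derives G x z.
Proof. by elim=> // x0 y0 z0 d _ IH /IH; apply: derives_step. Qed.

Lemma derives_ctx u v x y : derives G x y -> derives G (u ++ x ++ v) (u ++ y ++ v).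
Proof.
elim=> [x0|x0 y0 z0 [u0 [v0 [A [al [r [-> ->]]]]]] _ IH]; first exact: derives_refl.
apply: derives_step IH; exists (u ++ u0), (v0 ++ v), A, al.
by rewrite -!catA.
Qed.

Lemma derives_yields x y : derives G x y -> yields x y.
Proof.
elim=> [x0|x0 y0 z0 [u [v [A [al [r [-> ->]]]]]] _ g]; first exact: yields_refl.
have [z1 [z23 [-> g1 /yields_cat_inv [z2 [z3 [-> g2 g3]]]]]] := yields_cat_inv g.
exact/(yields_cat g1)/(yields_rule r).
Qed.

Lemma yields_derives x y : yields x y -> derives G x y.
Proof.
elim=> [|X u w _ d|A al u w1 w2 r _ d1 _ d2]; first exact: derives_refl.
  by have := derives_ctx [:: X] [::] d; rewrite !cats0.
have rule : derive1 G (A :: u) (al ++ u) by exists [::], u, A, al.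
apply: derives_step rule _; apply: derives_trans (derives_ctx [::] u d1) _.
by have := derives_ctx w1 [::] d2; rewrite !cats0.
Qed.

Lemma derivesE x y : derives G x y <-> yields x y.
Proof. by split; [exact: derives_yields | exact: yields_derives]. Qed.

End Yields.

Section TripleGrammar.

Variables (V Q : finType) (G : cfg V) (W : {set V}).
Variables (q0 : Q) (delta : Q -> V -> Q) (acc : {set Q}).

Local Notation T := (cfg_term G).

Definition triple_sym : finType := (V + option (Q * V * Q))%type.

Definition triple p X q : triple_sym := inr (Some (p, X, q)).

Definition triple_start : triple_sym := inr None.

Inductive chain : Q -> seq V -> Q -> seq triple_sym -> Prop :=
  | chain_nil p : chain p [::] p [::]
  | chain_cons p X r al q s : chain r al q s -> chain p (X :: al) q (triple p X r :: s).

Fixpoint chains (al : seq V) (p q : Q) : seq (seq triple_sym) :=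
  if al is X :: al' then
    flatten [seq [seq triple p X r :: s | s <- chains al' r q] | r <- enum Q]
  else if p == q then [:: [::]] else [::].

Lemma chainsP al p q s : s \in chains al p q <-> chain p al q s.
Proof.
elim: al p s => [|X al IH] p s /=.
  split=> [|c]; last by inversion c; rewrite eqxx inE.
  by case: eqP => [<- |//]; rewrite inE => /eqP ->; exact: chain_nil.
split=> [/flatten_mapP [r _ /mapP [s' /IH c ->]]|c]; first exact: chain_cons.
inversion c as [|? ? r ? ? s' c']; subst.
apply/flatten_mapP; exists r; first by rewrite mem_enum.
by apply/mapP; exists s' => //; apply/IH.
Qed.

Definition wdelta p a := if a \in W then delta p a else p.

Lemma foldl_wdelta p y : foldl wdelta p y = foldl delta p (proj W y).
Proof. by elim: y p => //= a y IH p; rewrite /wdelta /proj /=; case: (a \in W). Qed.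

Inductive triple_rule : triple_sym -> seq triple_sym -> Prop :=
  | triple_expand A al p q s :
      (A, al) \in cfg_rules G -> chain p al q s -> triple_rule (triple p A q) s
  | triple_term a p : a \in T -> triple_rule (triple p a (wdelta p a)) [:: inl a]
  | triple_erase a p : a \in W :\: T -> triple_rule (triple p a (wdelta p a)) [::]
  | triple_accept f : f \in acc -> triple_rule triple_start [:: triple q0 (cfg_start G) f].

Definition triple_rules : seq (triple_sym * seq triple_sym) :=
  flatten [seq flatten [seq [seq (triple pq.1 r.1 pq.2, s) | s <- chains r.2 pq.1 pq.2]
                           | pq <- enum {: Q * Q}] | r <- cfg_rules G]
  ++ [seq (triple p a (wdelta p a), [:: inl a]) | a <- enum T, p <- enum Q]
  ++ [seq (triple p a (wdelta p a), [::]) | a <- enum (W :\: T), p <- enum Q]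
  ++ [seq (triple_start, [:: triple q0 (cfg_start G) f]) | f <- enum acc].

Lemma triple_rulesP L R : (L, R) \in triple_rules <-> triple_rule L R.
Proof.
rewrite /triple_rules !mem_cat; split.
  case/or4P.
  - move=> /flatten_mapP [[A al] r /flatten_mapP [[p q] _ /mapP [s c [-> ->]]]].
    exact/(triple_expand r)/chainsP.
  - by case/allpairsP=> [[a p] [/= + _ [-> ->]]]; rewrite mem_enum; apply: triple_term.
  - by case/allpairsP=> [[a p] [/= + _ [-> ->]]]; rewrite mem_enum; apply: triple_erase.
  - by case/mapP=> f + [-> ->]; rewrite mem_enum; apply: triple_accept.
case=> [A al p q s r c|a p aT|a p aW|f fa]; apply/or4P.
- apply/Or41/flatten_mapP; exists (A, al) => //.
  apply/flatten_mapP; exists (p, q); first by rewrite mem_enum.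
  by apply/mapP; exists s => //; apply/chainsP.
- by apply/Or42/allpairsP; exists (a, p); rewrite !mem_enum.
- by apply/Or43/allpairsP; exists (a, p); rewrite !mem_enum.
- by apply/Or44/mapP; exists f; rewrite ?mem_enum.
Qed.

Definition triple_grammar : cfg triple_sym :=
  CFG [set inl a | a in T] triple_rules triple_start.

Local Notation G' := triple_grammar.

Lemma inr_notin_triple_term x : inr x \notin cfg_term G'.
Proof. by apply/imsetP => [[]]. Qed.

Lemma triple_grammar_wf : cfg_wf G'.
Proof.
split; last exact: inr_notin_triple_term.
by case=> L R /triple_rulesP [] *; apply: inr_notin_triple_term.
Qed.

End TripleGrammar.

Section TripleGrammarCorrect.

Variables (V Q : finType) (G : cfg V) (W : {set V}).
Variables (q0 : Q) (delta : Q -> V -> Q) (acc : {set Q}).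

Local Notation T := (cfg_term G).
Local Notation G' := (triple_grammar G W q0 delta acc).
Local Notation wdelta := (wdelta W delta).

Lemma triple_yields_sound s z :
  yields G' s z -> all (fun x => x \in cfg_term G') z ->
  forall p al q, chain p al q s ->
  exists y, [/\ yields G al y, proj (~: T :\: W) y = [::],
               z = map inl (proj T y) & foldl wdelta p y = q].
Proof.
elim=> [|X u w _ _|A be u w1 w2 r gbe IHbe gu IHu] zT p al q c.
- by inversion c; exists [::]; split=> //; exact: yields_nil.
- by inversion c; subst; case/andP: zT => /imsetP [].
move: zT; rewrite all_cat => /andP [zT1 zT2].
inversion c as [|? X r0 al' ? u' cu]; subst.
have [y2 [gy2 by2 -> <-]] := IHu zT2 _ _ _ cu.
move/triple_rulesP: r => r.
inversion r as [A' al0 p' q' s' rA c'|a p' aT|a p' aW|]; subst.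
- have [y1 [gy1 by1 -> <-]] := IHbe zT1 _ _ _ c'.
  exists (y1 ++ y2); split; rewrite ?proj_cat ?by1 ?by2 ?map_cat ?foldl_cat //.
  exact: yields_rule rA gy1 gy2.
- have -> : w1 = [:: inl X].
    case/yields1_inv: gbe => // [[al1 /triple_rulesP r1]].
    by inversion r1.
  exists (X :: y2); split; first exact: yields_keep.
  + by rewrite /proj /= in_setD in_setC aT andbF.
  + by rewrite /proj /= aT.
  + by [].
- rewrite (yields_nil_inv gbe).
  move: aW; rewrite in_setD => /andP [aT aW].
  exists (X :: y2); split; first exact: yields_keep.
  + by rewrite /proj /= in_setD aW.
  + by rewrite /proj /= (negbTE aT).
  + by [].
Qed.

Lemma triple_yields_complete al y :
  yields G al y -> proj (~: T :\: W) y = [::] ->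
  forall p, exists s, chain p al (foldl wdelta p y) s /\
                      yields G' s (map inl (proj T y)).
Proof.
elim=> [|X u w _ IH|A al' u w1 w2 r _ IH1 _ IH2] yW p.
- by exists [::]; split; [exact: chain_nil | exact: yields_nil].
- have wW : proj (~: T :\: W) w = [::] by move: yW; rewrite /proj /=; case: ifP.
  have [s [cs gs]] := IH wW (wdelta p X).
  exists (triple p X (wdelta p X) :: s); split; first exact: chain_cons.
  have [XT|XnT] := boolP (X \in T).
    rewrite /proj /= XT -/(proj T w).
    apply: (yields_rule (w1 := [:: inl X])) gs; last exact: yields_refl.
    exact/triple_rulesP/triple_term.
  rewrite /proj /= (negbTE XnT) -/(proj T w).
  apply: (yields_rule (w1 := [::])) gs; last exact: yields_nil.
  apply/triple_rulesP/triple_erase; rewrite in_setD XnT.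
  by move: yW; rewrite /proj /= in_setD in_setC XnT; case: (X \in W).
- have y1W : proj (~: T :\: W) w1 = [::] by move: yW; rewrite proj_cat; case: proj.
  have y2W : proj (~: T :\: W) w2 = [::] by move: yW; rewrite proj_cat y1W.
  have [s1 [c1 g1]] := IH1 y1W p.
  have [s2 [c2 g2]] := IH2 y2W (foldl wdelta p w1).
  exists (triple p A (foldl wdelta p w1) :: s2); split.
    by rewrite foldl_cat; exact: chain_cons.
  rewrite proj_cat map_cat; apply: yields_rule g1 g2.
  by apply/triple_rulesP; apply: triple_expand r c1.
Qed.

Lemma triple_grammar_langP w :
  cfg_lang G' (map inl w) <->
  exists2 y, sentential G y &
    [/\ proj (~: T :\: W) y = [::], foldl wdelta q0 y \in acc & w = proj T y].
Proof.
split.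
  case=> wT /derivesE /yields1_inv [|[al /triple_rulesP r g]].
    by case: w {wT} => [|? []].
  inversion r as [| | |f fa]; subst.
  have c1 : chain q0 [:: cfg_start G] f [:: triple q0 (cfg_start G) f].
    exact/chain_cons/chain_nil.
  have [y [gy yW /(inj_map inl_inj) -> yf]] := triple_yields_sound g wT c1.
  by exists y; [exact/derivesE | rewrite yf].
case=> y /derivesE gy [yW ya ->]; split.
  by apply/allP=> _ /mapP [a + ->]; rewrite mem_filter => /andP [aT _]; apply: imset_f.
have [s [c gs]] := triple_yields_complete gy yW q0.
inversion c as [|? ? r ? ? s' c']; inversion c'; subst.
apply/derivesE; rewrite -[map _ _]cats0.
apply: yields_rule gs (yields_nil _).
exact/triple_rulesP/triple_accept.
Qed.

End TripleGrammarCorrect.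

Theorem lemma1 (V : finType) (G : cfg V) (W : {set V}) (F : seq V -> Prop) :
  cfg_wf G -> regular_over W F ->
  context_free_over (cfg_term G) (finalized_lang G W F).
Proof.
move=> _ [Q [q0 [delta [acc hF]]]].
exists (triple_sym V Q), (triple_grammar G W q0 delta acc), inl.
split; first exact: inl_inj.
split; first exact: triple_grammar_wf.
split; first by [].
split=> [w _|w [y [_ [_ [_ ->]]]]]; last exact: filter_all.
split=> [[y [sy [Fy [yW ->]]]]|/triple_grammar_langP [y sy [yW ya ->]]].
  apply/triple_grammar_langP; exists y => //; split=> //.
  by rewrite foldl_wdelta; case/hF: Fy.
exists y; split=> //; split=> //.
by apply/hF; rewrite -foldl_wdelta filter_all.
Qed.
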